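(* Let $P$ be the Petersen graph on vertex set $\{1,\dots,10\}$ with edges $12,23,34,45,51$ (outer pentagon), $16,27,38,49,5\,10$ (spokes), and $68,8\,10,10\,7,79,96$ (inner pentagram). Let $X$ be the graph on $\{1,\dots,10\}$ with the 15 edges $\{10,1\},\{1,3\},\{3,4\},\{4,9\},\{9,6\},\{6,8\},\{8,5\},\{5,2\},\{2,7\},\{7,10\}$ (a Hamilton cycle) together with $\{2,8\},\{3,10\},\{4,5\},\{1,6\},\{7,9\}$. Then $KC(P)\cong G(10,3)$ and $KC(X)\cong G(10,3)$, while $X$ is not isomorphic to $P$. Thus the Desargues graph $G(10,3)$ is the Kronecker cover of two non-isomorphic simple graphs.
   Context: For a simple graph $G$, the Kronecker cover $KC(G)$ is the graph with vertex set $V(G)\times\{0,1\}$ in which $(u,a)$ is adjacent to $(v,b)$ if and only if $uv\in E(G)$ and $a\neq b$. The generalized Petersen graph $G(n,k)$ has vertices $u_0,\dots,u_{n-1},v_0,\dots,v_{n-1}$ and edges $u_iu_{i+1}$, $u_iv_i$ and $v_iv_{i+k}$, with indices taken mod $n$. $G(10,3)$ is the Desargues graph and $G(5,2)$ is the Petersen graph. The graph $X$ arises as follows: it has edges $\{i,\alpha(j)\}$ for each edge $ij$ of $P$, where $\alpha=(1\,8)(2\,10)(3\,5)$ is an involutive automorphism of $P$ fixing $4,6,7,9$. *)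

From mathcomp Require Import all_boot.
Set Implicit Arguments. Unset Strict Implicit. Unset Printing Implicit Defensive.

(* Simple graphs are symmetric irreflexive boolean relations on a finType. *)

Definition graph_iso (T U : finType) (e : rel T) (e' : rel U) : Prop :=
  exists f : T -> U, bijective f /\ forall x y, e' (f x) (f y) = e x y.

Definition KC (T : finType) (e : rel T) : rel (T * bool) :=
  fun x y => e x.1 y.1 && (x.2 != y.2).

(* Generalized Petersen graph G(n,k): u_i = (false, i), v_i = (true, i);
   edges u_i u_{i+1}, u_i v_i, v_i v_{i+k}, indices mod n. *)
Definition gp_arc (n k : nat) (x y : bool * 'I_n) : bool :=
  match x.1, y.1 with
  | false, false => (x.2 + 1) %% n == y.2
  | false, true  => x.2 == y.2 :> nat
  | true,  true  => (x.2 + k) %% n == y.2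
  | true,  false => false
  end.
Definition GP (n k : nat) : rel (bool * 'I_n) :=
  fun x y => @gp_arc n k x y || @gp_arc n k y x.

(* A graph on {1,...,10} given by a list of edges with the paper's labels;
   vertex label l is represented by the ordinal l-1 of 'I_10. *)
Definition graph_of_edges (s : seq (nat * nat)) : rel 'I_10 :=
  fun i j => ((i.+1, j.+1) \in s) || ((j.+1, i.+1) \in s).

Definition petersen_edges : seq (nat * nat) :=
  [:: (1,2); (2,3); (3,4); (4,5); (5,1);
      (1,6); (2,7); (3,8); (4,9); (5,10);
      (6,8); (8,10); (10,7); (7,9); (9,6)].

Definition X_edges : seq (nat * nat) :=
  [:: (10,1); (1,3); (3,4); (4,9); (9,6); (6,8); (8,5); (5,2); (2,7); (7,10);
      (2,8); (3,10); (4,5); (1,6); (7,9)].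

Definition Petersen : rel 'I_10 := graph_of_edges petersen_edges.
Definition Xgraph : rel 'I_10 := graph_of_edges X_edges.
Arguments GP : clear implicits.

(* For X no new map is
   needed: since the edges of X are {i, alpha j} for the edges ij of P, the
   cover KC(X) is isomorphic to KC(P) by applying alpha on the sheet {1}.  Yet
   P is triangle-free while X contains the triangle 10, 1, 3, so X is not
   isomorphic to P. *)
From mathcomp Require Import all_boot.
Set Implicit Arguments. Unset Strict Implicit. Unset Printing Implicit Defensive.

Definition triangle_free (T : finType) (e : rel T) : Prop :=
  forall a b c, ~~ [&& e a b, e b c & e c a].

Section GraphIso.

Variables T U V : finType.

Lemma graph_iso_trans (e : rel T) (e' : rel U) (e'' : rel V) :
  graph_iso e e' -> graph_iso e' e'' -> graph_iso e e''.
Proof.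
move=> [f [bij_f ef]] [h [bij_h eh]]; exists (h \o f); split.
  exact: bij_comp bij_h bij_f.
by move=> x y /=; rewrite eh ef.
Qed.

Lemma graph_iso_of_can (e : rel T) (e' : rel U) (f : T -> U) (g : U -> T) :
  cancel f g -> #|U| <= #|T| ->
  (forall x y, e' (f x) (f y) = e x y) -> graph_iso e e'.
Proof.
by move=> fK cardUT ef; exists f; split; first exact: inj_card_bij (can_inj fK) _.
Qed.

Lemma graph_iso_triangle_free (e : rel T) (e' : rel U) :
  graph_iso e e' -> triangle_free e -> triangle_free e'.
Proof.
move=> [f [[g _ fgK] ef]] tri_e a b c.
by rewrite -(fgK a) -(fgK b) -(fgK c) !ef.
Qed.

Lemma KC_twist_iso (e e' : rel T) (alpha : T -> T) :
  involutive alpha -> (forall x y, e (alpha x) (alpha y) = e x y) ->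
  (forall x y, e' x y = e x (alpha y)) -> graph_iso (KC e') (KC e).
Proof.
move=> alphaK auto_alpha e'E.
pose twist (x : T * bool) := (if x.2 then alpha x.1 else x.1, x.2).
exists twist; split.
  by exists twist => -[x []]; rewrite /twist /= ?alphaK.
move=> [x a] [y b]; rewrite /KC /twist e'E.
by case: a; case: b; rewrite /= ?andbT ?andbF // -[in RHS]auto_alpha alphaK.
Qed.

End GraphIso.

(* [inord] goes through the opaque [idP] and so does not reduce under
   [vm_compute]; reducing modulo n.+1 gives ordinals that compute. *)
Definition ord_mod (n m : nat) : 'I_n.+1 := Ordinal (ltn_pmod m (ltn0Sn n)).

Definition ords (n : nat) : seq 'I_n.+1 := map (ord_mod n) (iota 0 n.+1).

Lemma mem_ords n (i : 'I_n.+1) : i \in ords n.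
Proof.
have -> : i = ord_mod n i by apply: val_inj; rewrite /= modn_small.
by apply: map_f; rewrite mem_iota leq0n add0n ltn_ord.
Qed.

Definition ords_bool (n : nat) : seq ('I_n.+1 * bool) :=
  [seq (i, b) | i <- ords n, b <- [:: false; true]].

Lemma mem_ords_bool n (x : 'I_n.+1 * bool) : x \in ords_bool n.
Proof. by case: x => i b; apply: allpairs_f; rewrite ?mem_ords // !inE; case: b. Qed.

Definition petersen_to_desargues (x : 'I_10 * bool) : bool * 'I_10 :=
  (4 < x.1, ord_mod 9 (6 * x.1 + 5 * (x.2 != (4 < x.1)))).

Definition desargues_to_petersen (y : bool * 'I_10) : 'I_10 * bool :=
  (ord_mod 9 (5 * y.1 + y.2 %% 5), odd y.2 != y.1).

Lemma petersen_to_desarguesK : cancel petersen_to_desargues desargues_to_petersen.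
Proof.
have /allP fK : all (fun x => desargues_to_petersen (petersen_to_desargues x) == x)
                    (ords_bool 9) by vm_compute.
by move=> x; apply/eqP/fK/mem_ords_bool.
Qed.

Lemma KC_Petersen_iso : graph_iso (KC Petersen) (GP 10 3).
Proof.
apply: graph_iso_of_can petersen_to_desarguesK _ _.
  by rewrite !card_prod !card_bool card_ord.
have /allrelP fE : all2rel (fun x y => GP 10 3 (petersen_to_desargues x)
                      (petersen_to_desargues y) == KC Petersen x y) (ords_bool 9)
  by vm_compute.
by move=> x y; apply/eqP/fE; apply: mem_ords_bool.
Qed.

(* The involution alpha = (1 8)(2 10)(3 5) of the statement, on 0-based labels. *)
Definition alpha (i : 'I_10) : 'I_10 := ord_mod 9 (nth 0 [:: 7; 9; 4; 3; 2; 5; 6; 0; 8; 1] i).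

Lemma alphaK : involutive alpha.
Proof.
have /allP K : all (fun i => alpha (alpha i) == i) (ords 9) by vm_compute.
by move=> i; apply/eqP/K/mem_ords.
Qed.

Lemma alpha_Petersen_auto x y : Petersen (alpha x) (alpha y) = Petersen x y.
Proof.
have /allrelP E : all2rel (fun x y => Petersen (alpha x) (alpha y) == Petersen x y)
                    (ords 9) by vm_compute.
by apply/eqP/E; apply: mem_ords.
Qed.

Lemma Xgraph_twist x y : Xgraph x y = Petersen x (alpha y).
Proof.
have /allrelP E : all2rel (fun x y => Xgraph x y == Petersen x (alpha y)) (ords 9)
  by vm_compute.
by apply/eqP/E; apply: mem_ords.
Qed.

Lemma Petersen_triangle_free : triangle_free Petersen.
Proof.
have /allrelP E : all2rel (fun a b => all (fun c =>
                    ~~ [&& Petersen a b, Petersen b c & Petersen c a]) (ords 9)) (ords 9)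
  by vm_compute.
by move=> a b c; move/allP: (E a b (mem_ords a) (mem_ords b)); apply; apply: mem_ords.
Qed.

Theorem mainTheorem5 :
  graph_iso (KC Petersen) (GP 10 3) /\
  graph_iso (KC Xgraph) (GP 10 3) /\
  ~ graph_iso Petersen Xgraph.
Proof.
have KC_X_Petersen : graph_iso (KC Xgraph) (KC Petersen).
  exact: KC_twist_iso alphaK alpha_Petersen_auto Xgraph_twist.
split; first exact: KC_Petersen_iso.
split; first exact: graph_iso_trans KC_X_Petersen KC_Petersen_iso.
move/graph_iso_triangle_free/(_ Petersen_triangle_free).
by move/(_ (ord_mod 9 9) (ord_mod 9 0) (ord_mod 9 2)); vm_compute.
Qed.
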